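(* Let $(\boldsymbol{x}^1,\boldsymbol{x}^2)\in(\mathbb{T}^3\times\mathbb{T}^3)\setminus\Delta$ with $\boldsymbol{x}^j=(x^j,y^j,z^j)$, and assume $x^1-x^2=0$ and $y^1-y^2=0$. For $\omega_1,\omega_2,\dots\in\Omega_0$ set $\boldsymbol{x}^j_0=\boldsymbol{x}^j$ and $\boldsymbol{x}^j_n=f_{\omega_n}(\boldsymbol{x}^j_{n-1})$, $j=1,2$. Then for any $\varepsilon>0$ and any $\overline{\boldsymbol{x}}\in\mathbb{T}^3$ there exist $N_2\in\mathbb{N}$ and $(\omega_1,\dots,\omega_{N_2})\in\Omega_0^{N_2}$ such that $$\mathrm{dist}_{\mathbb{T}^3}(\boldsymbol{x}^1_{N_2},\overline{\boldsymbol{x}})<\varepsilon\qquad\text{and}\qquad \mathrm{dist}_{\mathbb{T}^3}(\overline{\boldsymbol{x}},\boldsymbol{x}^2_{N_2})=\mathrm{dist}_{\mathbb{T}^3}(\boldsymbol{x}^1,\boldsymbol{x}^2).$$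
   Context: $\mathbb{T}^3=\mathbb{R}^3/(2\pi\mathbb{Z})^3$ with its standard flat distance $\mathrm{dist}_{\mathbb{T}^3}$; $\Delta=\{(\boldsymbol{x}^1,\boldsymbol{x}^2):\boldsymbol{x}^1=\boldsymbol{x}^2\}$. Fix $U>0$ and let $\Omega_0=[-U,U]^3\times[0,2\pi)^3$, with elements $\omega=(\mathsf{A},\mathsf{B},\mathsf{C},\alpha,\beta,\gamma)$. Define maps of $\mathbb{T}^3$: $f_{(\mathsf{A},\alpha)}(x,y,z)=(x+\mathsf{A}\sin(z+\alpha),\ y+\mathsf{A}\cos(z+\alpha),\ z)$, $f_{(\mathsf{B},\beta)}(x,y,z)=(x,\ y+\mathsf{B}\sin(x+\beta),\ z+\mathsf{B}\cos(x+\beta))$, $f_{(\mathsf{C},\gamma)}(x,y,z)=(x+\mathsf{C}\cos(y+\gamma),\ y,\ z+\mathsf{C}\sin(y+\gamma))$, and $f_\omega=f_{(\mathsf{C},\gamma)}\circ f_{(\mathsf{B},\beta)}\circ f_{(\mathsf{A},\alpha)}$. *)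

From Stdlib Require Import Reals.
Open Scope R_scope.

(* Points of T^3 = R^3/(2 pi Z)^3 are represented by representatives in R^3. *)
Definition pt : Type := (R * R * R)%type.

Definition cong2pi (a b : R) : Prop := exists k : Z, a - b = 2 * PI * IZR k.

Definition teq (p q : pt) : Prop :=
  let '(x1, y1, z1) := p in let '(x2, y2, z2) := q in
  cong2pi x1 x2 /\ cong2pi y1 y2 /\ cong2pi z1 z2.

Definition mod2pi (t : R) : R := t - 2 * PI * IZR (Int_part (t / (2 * PI))).

Definition dcirc (a b : R) : R :=
  Rmin (mod2pi (a - b)) (2 * PI - mod2pi (a - b)).

Definition dist_T3 (p q : pt) : R :=
  let '(x1, y1, z1) := p in let '(x2, y2, z2) := q in
  sqrt (dcirc x1 x2 ^ 2 + dcirc y1 y2 ^ 2 + dcirc z1 z2 ^ 2).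

Record omega : Type := mkOmega {
  oA : R; oB : R; oC : R; oalpha : R; obeta : R; ogamma : R }.

Definition in_Omega0 (U : R) (w : omega) : Prop :=
  -U <= oA w <= U /\ -U <= oB w <= U /\ -U <= oC w <= U /\
  0 <= oalpha w < 2 * PI /\ 0 <= obeta w < 2 * PI /\ 0 <= ogamma w < 2 * PI.

Definition fA (A alpha : R) (p : pt) : pt :=
  let '(x, y, z) := p in (x + A * sin (z + alpha), y + A * cos (z + alpha), z).
Definition fB (B beta : R) (p : pt) : pt :=
  let '(x, y, z) := p in (x, y + B * sin (x + beta), z + B * cos (x + beta)).
Definition fC (C gamma : R) (p : pt) : pt :=
  let '(x, y, z) := p in (x + C * cos (y + gamma), y, z + C * sin (y + gamma)).

Definition f_omega (w : omega) (p : pt) : pt :=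
  fC (oC w) (ogamma w) (fB (oB w) (obeta w) (fA (oA w) (oalpha w) p)).

(* orbit: iter_f ws n p = x_n where x_0 = p, x_n = f_{omega_n}(x_{n-1}),
   with omega_n := ws (n-1) *)
Fixpoint iter_f (ws : nat -> omega) (n : nat) (p : pt) : pt :=
  match n with
  | O => p
  | S m => f_omega (ws m) (iter_f ws m p)
  end.

(* When two points have the same x- and y-coordinates modulo 2 pi, every map
   f_(B,beta) and f_(C,gamma) moves them by the same vector.  Choosing beta with
   x + beta = pi/2 or x + beta = 0 (mod 2 pi) turns f_(B,beta) into a translation
   by B along y or along z, and then choosing gamma with y + gamma = 0 turns
   f_(C,gamma) into a translation by C along x.  Splitting each coordinate of
   xbar - x^1 into N steps of size at most U carries x^1 exactly onto xbar,
   while x^2 undergoes the same translation, an isometry of T^3. *)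

From Stdlib Require Import Reals.
From Stdlib Require Import Lra Lia ZArith.
Open Scope R_scope.

Lemma cong2pi_sym (a b : R) : cong2pi a b -> cong2pi b a.
Proof. intros [k Hk]. exists (- k)%Z. rewrite opp_IZR. lra. Qed.

Lemma cong2pi_addr (a b d : R) : cong2pi a b -> cong2pi (a + d) (b + d).
Proof. intros [k Hk]. exists k. lra. Qed.

Lemma cong2pi_periodic (f : R -> R) :
  (forall x n, f (x + 2 * INR n * PI) = f x) ->
  forall a b, cong2pi a b -> f a = f b.
Proof.
  intros Hf a b [k Hk].
  replace a with (b + 2 * PI * IZR k) by lra.
  destruct (Z_le_gt_dec 0 k) as [Hk0 | Hk0].
  - rewrite <- (Z2Nat.id k), <- INR_IZR_INZ by lia.
    rewrite <- (Hf b (Z.to_nat k)). f_equal. ring.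
  - rewrite <- (Hf (b + 2 * PI * IZR k) (Z.to_nat (- k))). f_equal.
    rewrite INR_IZR_INZ, Z2Nat.id, opp_IZR by lia. ring.
Qed.

Lemma mod2pi_range (t : R) : 0 <= mod2pi t < 2 * PI.
Proof.
  unfold mod2pi. pose proof PI_RGT_0.
  set (q := t / (2 * PI)).
  assert (Hq : t = 2 * PI * q) by (unfold q; field; lra).
  destruct (base_Int_part q) as [Hlo Hhi].
  rewrite Hq. split; nra.
Qed.

Lemma mod2pi_0 : mod2pi 0 = 0.
Proof.
  unfold mod2pi. rewrite Rdiv_0_l.
  change 0 with (INR 0) at 2. rewrite Int_part_INR. simpl. ring.
Qed.

Definition phase (theta a : R) : R := mod2pi (theta - a).

Lemma phase_range (theta a : R) : 0 <= phase theta a < 2 * PI.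
Proof. apply mod2pi_range. Qed.

Lemma cong2pi_add_phase (theta a x : R) :
  cong2pi x a -> cong2pi (x + phase theta a) theta.
Proof.
  intros [j Hj]. unfold phase, mod2pi.
  exists (j - Int_part ((theta - a) / (2 * PI)))%Z.
  rewrite minus_IZR. lra.
Qed.

Lemma sin_add_phase (theta a x : R) :
  cong2pi x a -> sin (x + phase theta a) = sin theta.
Proof.
  intros H. apply (cong2pi_periodic sin sin_period), cong2pi_add_phase, H.
Qed.

Lemma cos_add_phase (theta a x : R) :
  cong2pi x a -> cos (x + phase theta a) = cos theta.
Proof.
  intros H. apply (cong2pi_periodic cos cos_period), cong2pi_add_phase, H.
Qed.

Lemma dcirc_eq_diff (a b a' b' : R) : a - b = a' - b' -> dcirc a b = dcirc a' b'.
Proof. intros H. unfold dcirc. rewrite H. reflexivity. Qed.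

Lemma dcirc_refl (a : R) : dcirc a a = 0.
Proof.
  unfold dcirc. rewrite Rminus_diag, mod2pi_0.
  apply Rmin_left. pose proof PI_RGT_0. lra.
Qed.

Lemma dist_T3_eq_diff (x1 y1 z1 x2 y2 z2 x1' y1' z1' x2' y2' z2' : R) :
  x1 - x2 = x1' - x2' -> y1 - y2 = y1' - y2' -> z1 - z2 = z1' - z2' ->
  dist_T3 (x1, y1, z1) (x2, y2, z2) = dist_T3 (x1', y1', z1') (x2', y2', z2').
Proof.
  intros Hx Hy Hz. unfold dist_T3.
  rewrite (dcirc_eq_diff _ _ _ _ Hx), (dcirc_eq_diff _ _ _ _ Hy),
    (dcirc_eq_diff _ _ _ _ Hz).
  reflexivity.
Qed.

Lemma dist_T3_refl (p : pt) : dist_T3 p p = 0.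
Proof.
  destruct p as [[x y] z]. unfold dist_T3.
  rewrite !dcirc_refl. replace (0 ^ 2 + 0 ^ 2 + 0 ^ 2) with 0 by ring.
  apply sqrt_0.
Qed.

Definition translate (a b c : R) (p : pt) : pt :=
  let '(x, y, z) := p in (x + a, y + b, z + c).

Lemma iter_f_ext (ws ws' : nat -> omega) (n : nat) (p : pt) :
  (forall i, (i < n)%nat -> ws i = ws' i) -> iter_f ws n p = iter_f ws' n p.
Proof.
  induction n as [|n IH]; intros H; simpl; [reflexivity|].
  rewrite H, IH by (lia || intros; apply H; lia). reflexivity.
Qed.

Lemma iter_f_const_translate (w : omega) (P : pt -> Prop) (a b c : R) :
  (forall p, P p -> P (translate a b c p) /\ f_omega w p = translate a b c p) ->
  forall n p, P p ->
  iter_f (fun _ => w) n p = translate (INR n * a) (INR n * b) (INR n * c) p.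
Proof.
  intros Hw n p Hp.
  assert (Hinv : P (iter_f (fun _ => w) n p) /\
          iter_f (fun _ => w) n p = translate (INR n * a) (INR n * b) (INR n * c) p).
  { induction n as [|n [HP IH]].
    - destruct p as [[x y] z]. simpl. rewrite !Rmult_0_l, !Rplus_0_r. auto.
    - simpl iter_f. destruct (Hw _ HP) as [HP' Hstep].
      rewrite Hstep. split; [exact HP'|].
      rewrite IH, S_INR. destruct p as [[x y] z]. simpl.
      f_equal; [f_equal|]; ring. }
  apply Hinv.
Qed.

Definition sched_app (n : nat) (ws ws' : nat -> omega) (i : nat) : omega :=
  if (i <? n)%nat then ws i else ws' (i - n)%nat.

Lemma iter_f_sched_app (n m : nat) (ws ws' : nat -> omega) (p : pt) :
  iter_f (sched_app n ws ws') (n + m) p = iter_f ws' m (iter_f ws n p).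
Proof.
  induction m as [|m IH].
  - rewrite Nat.add_0_r. change (iter_f ws' 0 ?q) with q. apply iter_f_ext. intros i Hi.
    unfold sched_app. rewrite (proj2 (Nat.ltb_lt i n) Hi). reflexivity.
  - rewrite Nat.add_succ_r. simpl. rewrite IH. unfold sched_app.
    rewrite (proj2 (Nat.ltb_ge (n + m) n)) by lia.
    replace (n + m - n)%nat with m by lia. reflexivity.
Qed.

Lemma sched_app_forall (P : omega -> Prop) (n : nat) (ws ws' : nat -> omega) :
  (forall i, P (ws i)) -> (forall i, P (ws' i)) ->
  forall i, P (sched_app n ws ws' i).
Proof. intros H H' i. unfold sched_app. destruct (i <? n)%nat; auto. Qed.

Definition move_B (B beta : R) : omega := mkOmega 0 B 0 0 beta 0.
Definition move_C (C gamma : R) : omega := mkOmega 0 0 C 0 0 gamma.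

Lemma in_Omega0_move_B (U B beta : R) :
  -U <= B <= U -> 0 <= beta < 2 * PI -> in_Omega0 U (move_B B beta).
Proof. intros HB Hbeta. pose proof PI_RGT_0. repeat split; simpl; lra. Qed.

Lemma in_Omega0_move_C (U C gamma : R) :
  -U <= C <= U -> 0 <= gamma < 2 * PI -> in_Omega0 U (move_C C gamma).
Proof. intros HC Hgamma. pose proof PI_RGT_0. repeat split; simpl; lra. Qed.

Lemma f_omega_move_B (B beta x y z : R) :
  f_omega (move_B B beta) (x, y, z) =
  (x, y + B * sin (x + beta), z + B * cos (x + beta)).
Proof. unfold f_omega, fA, fB, fC; simpl. rewrite !Rmult_0_l, !Rplus_0_r. reflexivity. Qed.

Lemma f_omega_move_C (C gamma x y z : R) :
  f_omega (move_C C gamma) (x, y, z) =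
  (x + C * cos (y + gamma), y, z + C * sin (y + gamma)).
Proof. unfold f_omega, fA, fB, fC; simpl. rewrite !Rmult_0_l, !Rplus_0_r. reflexivity. Qed.

Section TranslationSchedule.

Variable N : nat.
Hypothesis HN : (0 < N)%nat.

Let HN_neq0 : INR N <> 0.
Proof. apply not_0_INR. lia. Qed.

Lemma iter_move_B_y (d x0 x y z : R) : cong2pi x x0 ->
  iter_f (fun _ => move_B (d / INR N) (phase (PI / 2) x0)) N (x, y, z) = (x, y + d, z).
Proof.
  intros Hx.
  rewrite (iter_f_const_translate _ (fun p => let '(x', _, _) := p in cong2pi x' x0)
             0 (d / INR N) 0).
  - simpl. f_equal; [f_equal|]; field; exact HN_neq0.
  - intros [[x' y'] z'] Hx'. simpl.
    rewrite f_omega_move_B, sin_add_phase, cos_add_phase, sin_PI2, cos_PI2 by exact Hx'.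
    split; [rewrite Rplus_0_r; exact Hx' | f_equal; [f_equal|]; ring].
  - exact Hx.
Qed.

Lemma iter_move_B_z (d x0 x y z : R) : cong2pi x x0 ->
  iter_f (fun _ => move_B (d / INR N) (phase 0 x0)) N (x, y, z) = (x, y, z + d).
Proof.
  intros Hx.
  rewrite (iter_f_const_translate _ (fun p => let '(x', _, _) := p in cong2pi x' x0)
             0 0 (d / INR N)).
  - simpl. f_equal; [f_equal|]; field; exact HN_neq0.
  - intros [[x' y'] z'] Hx'. simpl.
    rewrite f_omega_move_B, sin_add_phase, cos_add_phase, sin_0, cos_0 by exact Hx'.
    split; [rewrite Rplus_0_r; exact Hx' | f_equal; [f_equal|]; ring].
  - exact Hx.
Qed.

Lemma iter_move_C_x (d y0 x y z : R) : cong2pi y y0 ->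
  iter_f (fun _ => move_C (d / INR N) (phase 0 y0)) N (x, y, z) = (x + d, y, z).
Proof.
  intros Hy.
  rewrite (iter_f_const_translate _ (fun p => let '(_, y', _) := p in cong2pi y' y0)
             (d / INR N) 0 0).
  - simpl. f_equal; [f_equal|]; field; exact HN_neq0.
  - intros [[x' y'] z'] Hy'. simpl.
    rewrite f_omega_move_C, sin_add_phase, cos_add_phase, sin_0, cos_0 by exact Hy'.
    split; [rewrite Rplus_0_r; exact Hy' | f_equal; [f_equal|]; ring].
  - exact Hy.
Qed.

(* The moves along x come last, when the y-coordinate has become y0 + dy. *)
Definition translation_schedule (x0 y0 dx dy dz : R) : nat -> omega :=
  sched_app N (fun _ => move_B (dy / INR N) (phase (PI / 2) x0))
    (sched_app N (fun _ => move_B (dz / INR N) (phase 0 x0))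
       (fun _ => move_C (dx / INR N) (phase 0 (y0 + dy)))).

Lemma iter_translation_schedule (x0 y0 dx dy dz x y z : R) :
  cong2pi x x0 -> cong2pi y y0 ->
  iter_f (translation_schedule x0 y0 dx dy dz) (N + (N + N)) (x, y, z) =
  (x + dx, y + dy, z + dz).
Proof.
  intros Hx Hy. unfold translation_schedule.
  rewrite !iter_f_sched_app, iter_move_B_y, iter_move_B_z, iter_move_C_x
    by (exact Hx || apply cong2pi_addr, Hy).
  reflexivity.
Qed.

Lemma in_Omega0_translation_schedule (U x0 y0 dx dy dz : R) :
  -U <= dx / INR N <= U -> -U <= dy / INR N <= U -> -U <= dz / INR N <= U ->
  forall i, in_Omega0 U (translation_schedule x0 y0 dx dy dz i).
Proof.
  intros Hdx Hdy Hdz.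
  repeat apply sched_app_forall; intros _;
    (apply in_Omega0_move_B || apply in_Omega0_move_C);
    (assumption || apply phase_range).
Qed.

End TranslationSchedule.

Lemma exists_fine_subdivision (U M : R) : 0 < U -> 0 <= M ->
  exists N : nat, (0 < N)%nat /\
    forall d, Rabs d <= M -> -U <= d / INR N <= U.
Proof.
  intros HU HM.
  destruct (INR_unbounded (M / U)) as [N HN].
  assert (HMN : M < INR N * U).
  { replace M with (M / U * U) by (field; lra). apply Rmult_lt_compat_r; lra. }
  assert (HNpos : 0 < INR N) by nra.
  exists N. split; [apply INR_lt; exact HNpos|].
  intros d Hd.
  pose proof (Rle_abs d). pose proof (Rle_abs (- d)). rewrite Rabs_Ropp in *.
  set (t := d / INR N).
  assert (Hd_t : d = t * INR N) by (unfold t; field; lra).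
  split; nra.
Qed.

Theorem lemma3p8 (U : R) (hU : 0 < U)
  (x1 y1 z1 x2 y2 z2 : R)
  (hoff : ~ teq (x1, y1, z1) (x2, y2, z2))
  (hx : cong2pi x1 x2) (hy : cong2pi y1 y2)
  (eps : R) (heps : 0 < eps) (xbar : pt) :
  exists (N2 : nat) (ws : nat -> omega),
    (forall n, (n < N2)%nat -> in_Omega0 U (ws n)) /\
    dist_T3 (iter_f ws N2 (x1, y1, z1)) xbar < eps /\
    dist_T3 xbar (iter_f ws N2 (x2, y2, z2)) = dist_T3 (x1, y1, z1) (x2, y2, z2).
Proof.
  destruct xbar as [[xb yb] zb].
  set (dx := xb - x1). set (dy := yb - y1). set (dz := zb - z1).
  assert (Habs : 0 <= Rabs dx /\ 0 <= Rabs dy /\ 0 <= Rabs dz)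
    by (repeat split; apply Rabs_pos).
  destruct (exists_fine_subdivision U (Rabs dx + Rabs dy + Rabs dz))
    as [N [HN Hsmall]]; [exact hU | lra |].
  exists (N + (N + N))%nat, (translation_schedule N x1 y1 dx dy dz).
  split; [|split].
  - intros n _. apply in_Omega0_translation_schedule; apply Hsmall; lra.
  - rewrite iter_translation_schedule by (exact HN || exists 0%Z; ring).
    rewrite (dist_T3_eq_diff _ _ _ _ _ _ xb yb zb xb yb zb)
      by (unfold dx, dy, dz; ring).
    rewrite dist_T3_refl. exact heps.
  - rewrite iter_translation_schedule by (exact HN || apply cong2pi_sym; assumption).
    apply dist_T3_eq_diff; unfold dx, dy, dz; ring.
Qed.
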